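(* Let $\lambda=(a,b)$ with $a\ge b\ge1$. Then $$\xi(q)=\sum_k|S_k(\lambda)|q^k=\sum_{i\ge0}|\mathcal D_\lambda(i)|\,(1+q)^i .$$
   Context: $N=a+b$; the shape $(a,b)$ has $a$ boxes in row 1 and $b$ in row 2, left-justified. A row-standard filling uses $1,\dots,N$ once each with rows strictly increasing. Inversion pairs of a row-standard $\tau$: for a box $c$ and $r\ge1$ let $c^{(r)}$ be the box $r$ positions to its right, if it exists. For distinct boxes $c,c'$ in the same column with $\tau(c)<\tau(c')$, let $r\ge1$ be least such that one of $c^{(r)},c'^{(r)}$ does not exist or $\tau(c^{(r)})\ne\tau(c'^{(r)})$; $(c,c')$ is an inversion pair if either (one does not exist and $c$ lies below $c'$) or (both exist and $\tau(c^{(r)})>\tau(c'^{(r)})$). $S_k(\lambda)$: row-standard fillings of shape $\lambda$ with exactly $k$ inversion pairs. A Dyck path of shape $(a,b)$ is a lattice path $\{v_0,\dots,v_{a+b}\}$ from $(0,0)$ to $(a,b)$ with steps $(1,0)$ or $(0,1)$ and every point $(x,y)$ satisfying $y\le x$; $\mathcal D_\lambda$ is the set of these. A return to ground is an index $i\ge1$ with $v_i=(x,x)$ for some $x$; $\mathcal D_\lambda(i)$ is the set of paths in $\mathcal D_\lambda$ with exactly $i$ returns to ground. *)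

From HB Require Import structures.
From mathcomp Require Import all_boot all_order all_algebra.
Set Implicit Arguments. Unset Strict Implicit. Unset Printing Implicit Defensive.
Import GRing.Theory.

(* Boxes of the shape (a,b) (with a >= b) are encoded as pairs (r, c) of a
   row index r : 'I_2 (0 = first/top row, 1 = second row) and a column
   index c : 'I_a; the box exists iff c < (length of row r). *)
Definition row_len (a b : nat) (r : nat) : nat := if r == 0 then a else b.

Definition in_shape (a b : nat) (x : 'I_2 * 'I_a) : bool :=
  (x.2 < row_len a b x.1)%N.

(* A filling: a finite function on all encoded boxes with values in
   {0,...,N}; boxes outside the shape carry the dummy value 0. *)
Definition filling (a b : nat) := {ffun 'I_2 * 'I_a -> 'I_(a + b).+1}.

Definition row_standard (a b : nat) (t : filling a b) : bool :=
  [forall x, (~~ in_shape b x) ==> (val (t x) == 0%N)] &&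
  [forall x, in_shape b x ==> (val (t x) != 0%N)] &&
  [forall x, forall y, [&& in_shape b x, in_shape b y & t x == t y] ==> (x == y)] &&
  [forall x, forall y,
     [&& in_shape b x, in_shape b y, x.1 == y.1 & (x.2 < y.2)%N]
       ==> (val (t x) < val (t y))%N].

Definition entry (a b : nat) (t : filling a b) (r c : nat) : option nat :=
  if [pick x | [&& in_shape b x, val x.1 == r & val x.2 == c]] is Some x
  then Some (val (t x)) else None.

(* Scan r = r0, r0+1, ... for the least r with c^(r) or c'^(r) missing,
   or with distinct entries there, and decide the inversion condition. *)
Fixpoint inv_scan (a b : nat) (t : filling a b) (rc cc rc' cc' : nat)
    (fuel r : nat) : bool :=
  match fuel with
  | 0 => false
  | f.+1 =>
    match entry t rc (cc + r), entry t rc' (cc' + r) with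
    | Some x, Some y =>
        if x == y then inv_scan t rc cc rc' cc' f r.+1 else (y < x)%N
    | _, _ => (rc' < rc)%N   (* c lies below c' *)
    end
  end.

Definition inversion_pair (a b : nat) (t : filling a b)
    (c c' : 'I_2 * 'I_a) : bool :=
  [&& in_shape b c, in_shape b c', c != c', val c.2 == val c'.2,
      (val (t c) < val (t c'))%N &
      inv_scan t c.1 c.2 c'.1 c'.2 a.+1 1].

Definition ninv (a b : nat) (t : filling a b) : nat :=
  #|[set p : ('I_2 * 'I_a) * ('I_2 * 'I_a) | inversion_pair t p.1 p.2]|.

Definition S_k (a b k : nat) : {set filling a b} :=
  [set t : filling a b | row_standard t && (ninv t == k)].

(* Lattice paths from (0,0) to (a,b) encoded by their step sequence:
   false = step (1,0), true = step (0,1).  The point v_i is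
   (#false in the first i steps, #true in the first i steps). *)
Definition pt_x (n : nat) (p : n.-tuple bool) (i : nat) : nat :=
  count negb (take i p).
Definition pt_y (n : nat) (p : n.-tuple bool) (i : nat) : nat :=
  count id (take i p).

Definition dyck (a b : nat) (p : (a + b).-tuple bool) : bool :=
  (pt_x p (a + b) == a) && (pt_y p (a + b) == b) &&
  [forall i : 'I_(a + b).+1, (pt_y p i <= pt_x p i)%N].

Definition nreturns (n : nat) (p : n.-tuple bool) : nat :=
  #|[set i : 'I_n.+1 | (0 < val i)%N && (pt_x p i == pt_y p i)]|.

Definition D_i (a b i : nat) : {set (a + b).-tuple bool} :=
  [set p : (a + b).-tuple bool | dyck p && (nreturns p == i)].

From HB Require Import structures.
From mathcomp Require Import all_boot all_order all_algebra.
From mathcomp Require Import zify ring.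
Set Implicit Arguments. Unset Strict Implicit. Unset Printing Implicit Defensive.
Import Order.TTheory GRing.Theory Num.Theory.

(* A row-standard filling of shape (a,b) is the same thing as a word with a
   letters [false] and b letters [true]: its k-th letter says in which row the
   value k+1 sits.  All entries being distinct, the scan defining an inversion
   pair within column c stops at column c+1, so the inversions are the sign
   changes of "top entry < bottom entry" along the columns 0 .. b-1, the sign
   after the last column being "<".  Appending letters one at a time turns
   both sides of the identity into transfer recursions in the height
   #false - #true of the word, and a joint induction shows that they agree at
   nonnegative height. *)

Fixpoint words (n : nat) : seq (seq bool) :=
  if n is n'.+1 then [seq rcons s x | s <- words n', x <- [:: false; true]]
  else [:: [::]].

Lemma mem_words n s : (s \in words n) = (size s == n).
Proof.
elim: n s => [|n IH] s; first by rewrite inE; case: s.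
apply/allpairsP/idP => [[[s' x] [/= Hs _ ->]]|].
  by rewrite size_rcons eqSS -IH.
case/lastP: s => [//|s x]; rewrite size_rcons eqSS => Hs.
by exists (s, x); split => //=; [rewrite IH | case: x].
Qed.

Lemma uniq_words n : uniq (words n).
Proof.
elim: n => [//|n IH]; apply: allpairs_uniq => // -[s1 x1] [s2 x2] _ _ /=.
exact: rcons_inj.
Qed.

Lemma big_words_rcons (V : nmodType) n (F : seq bool -> V) :
  (\sum_(s <- words n.+1) F s
   = \sum_(s <- words n) (F (rcons s false) + F (rcons s true)))%R.
Proof.
change (words n.+1) with [seq rcons s x | s <- words n, x <- [:: false; true]].
rewrite big_allpairs_dep; apply: eq_bigr => s _.
by rewrite big_cons big_seq1.
Qed.

Lemma big_tuple_words (V : nmodType) n (F : seq bool -> V) :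
  (\sum_(p : n.-tuple bool) F p = \sum_(s <- words n) F s)%R.
Proof.
rewrite -(big_map val xpredT F); apply/perm_big/uniq_perm.
- by rewrite map_inj_uniq ?index_enum_uniq //; exact: val_inj.
- exact: uniq_words.
move=> s; rewrite mem_words; apply/mapP/idP => [[p _ ->]|Hs].
  by rewrite size_tuple.
by exists (Tuple Hs); rewrite ?mem_index_enum.
Qed.

Lemma count_rcons T (p : pred T) s x : count p (rcons s x) = (count p s + p x)%N.
Proof. by rewrite -cats1 count_cat /= addn0. Qed.

Lemma count_negb_id (s : seq bool) : (count negb s + count id s)%N = size s.
Proof. by rewrite addnC -(count_predC id s). Qed.

Lemma iota0_rcons n : iota 0 n.+1 = rcons (iota 0 n) n.
Proof. by rewrite -addn1 iotaD cats1. Qed.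

Definition occ (x : bool) (w : seq bool) : seq nat :=
  [seq k <- iota 0 (size w) | nth false w k == x].

Lemma occ_rcons x w y :
  occ x (rcons w y) = if y == x then rcons (occ x w) (size w) else occ x w.
Proof.
rewrite /occ size_rcons iota0_rcons filter_rcons nth_rcons ltnn eqxx.
rewrite (@eq_in_filter _ _ (fun k => nth false w k == x)) // => k.
by rewrite mem_iota /= => Hk; rewrite nth_rcons Hk.
Qed.

Lemma mem_occ x w k : (k \in occ x w) = (k < size w)%N && (nth false w k == x).
Proof. by rewrite mem_filter mem_iota /= andbC. Qed.

Lemma size_occ x w : size (occ x w) = count (pred1 x) w.
Proof.
rewrite size_filter.
transitivity (count (pred1 x) (map (nth false w) (iota 0 (size w)))).
  by rewrite count_map.
by rewrite -/(mkseq _ _) mkseq_nth.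
Qed.

Lemma size_occT w : size (occ true w) = count id w.
Proof. by rewrite size_occ; apply: eq_count => -[]. Qed.

Lemma size_occF w : size (occ false w) = count negb w.
Proof. by rewrite size_occ; apply: eq_count => -[]. Qed.

Lemma sorted_occ x w : sorted ltn (occ x w).
Proof. exact/sorted_filter/iota_ltn_sorted/ltn_trans. Qed.

Lemma nth_occ_lt x w c : (c < size (occ x w))%N -> (nth 0 (occ x w) c < size w)%N.
Proof. by move/(mem_nth 0); rewrite mem_occ => /andP[]. Qed.

Lemma nth_nth_occ x w c :
  (c < size (occ x w))%N -> nth false w (nth 0 (occ x w) c) = x.
Proof. by move/(mem_nth 0); rewrite mem_occ => /andP[_ /eqP]. Qed.

Lemma nth_occ_mono x w c d : (c < d)%N -> (d < size (occ x w))%N ->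
  (nth 0 (occ x w) c < nth 0 (occ x w) d)%N.
Proof.
move=> lt_cd Hd; apply: (sorted_ltn_nth ltn_trans 0 (sorted_occ x w)) => //.
by rewrite inE (ltn_trans lt_cd).
Qed.

Lemma eq_from_occ w1 w2 :
  size w1 = size w2 -> occ true w1 = occ true w2 -> w1 = w2.
Proof.
move=> Hs Ho; apply: (eq_from_nth (x0 := false) Hs) => k Hk.
have := congr1 (fun s => k \in s) Ho; rewrite /= !mem_occ Hk -Hs Hk /=.
by case: (nth false w1 k); case: (nth false w2 k).
Qed.

(* Reading [w] as a two-row filling ([false] = first row), whether the c-th
   entry of the first row is smaller than the c-th entry of the second row;
   a missing entry counts as larger than all others. *)
Definition top_lt_bot (w : seq bool) (c : nat) : bool :=
  (nth (size w) (occ false w) c < nth (size w) (occ true w) c)%N.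

Lemma top_lt_bot_rcons w x c : (c < count id w)%N ->
  top_lt_bot (rcons w x) c = top_lt_bot w c.
Proof.
rewrite -size_occT /top_lt_bot size_rcons !occ_rcons => Hc.
have Ht := nth_occ_lt Hc.
have nthT d : nth d (occ true w) c = nth 0 (occ true w) c := set_nth_default _ _ Hc.
case: x => /=; rewrite ?nth_rcons ?Hc !nthT.
  case: (ltnP c (size (occ false w))) => Hf.
    by rewrite !(set_nth_default 0 _ Hf).
  by rewrite !(nth_default _ Hf); lia.
case: (ltnP c (size (occ false w))) => Hf; first by rewrite !(set_nth_default 0 _ Hf).
rewrite (nth_default _ Hf); case: eqP => _; lia.
Qed.

Lemma top_lt_bot_rcons_true w :
  top_lt_bot (rcons w true) (count id w) = (count id w < count negb w)%N.
Proof.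
rewrite /top_lt_bot size_rcons !occ_rcons /= nth_rcons -size_occT ltnn eqxx.
rewrite -size_occF; case: (ltnP (size (occ true w)) (size (occ false w))) => Hf.
  by rewrite (set_nth_default 0 _ Hf) nth_occ_lt.
by rewrite nth_default //; lia.
Qed.

Definition sign_changes (f : nat -> bool) (m : nat) (final : bool) : nat :=
  \sum_(c < m) (f c != (if (c.+1 < m)%N then f c.+1 else final)).

Definition changes (final : bool) (w : seq bool) : nat :=
  sign_changes (top_lt_bot w) (count id w) final.

Lemma sign_changes_le f m final : (sign_changes f m final <= m)%N.
Proof.
rewrite -[X in (_ <= X)%N](card_ord m) -sum1_card.
by apply: leq_sum => i _; exact: leq_b1.
Qed.

Lemma changes_rcons_false final w : changes final (rcons w false) = changes final w.
Proof.
rewrite /changes /sign_changes count_rcons addn0; apply: eq_bigr => c _.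
by rewrite top_lt_bot_rcons //; case: ifP => // Hc; rewrite top_lt_bot_rcons.
Qed.

Lemma changes_rcons_true final w (sg := (count id w < count negb w)%N) :
  changes final (rcons w true) = (changes sg w + (sg != final))%N.
Proof.
rewrite /changes /sign_changes count_rcons addn1 big_ord_recr /= ltnn.
rewrite top_lt_bot_rcons_true; congr (_ + _)%N; apply: eq_bigr => c _.
rewrite top_lt_bot_rcons //= ltnS.
case: (ltngtP c.+1 (count id w)) => Hc.
- by rewrite top_lt_bot_rcons.
- by have := ltn_ord c; lia.
- by rewrite Hc top_lt_bot_rcons_true.
Qed.

Definition height (w : seq bool) : int := (count negb w)%:Z - (count id w)%:Z.

Lemma height_rcons w x : height (rcons w x) = (height w + (if x then -1 else 1))%R.
Proof. by rewrite /height !count_rcons; case: x => /=; lia. Qed.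

(** * Row-standard fillings as words *)

Section Fillings.

Variables a b : nat.
Hypothesis hab : (b <= a)%N.
Implicit Types (t : filling a b) (x y : 'I_2 * 'I_a).

Lemma ord2P (r : 'I_2) : r = ord0 \/ r = ord_max.
Proof. by case: r => -[|[|//]] Hr; [left|right]; apply: val_inj. Qed.

Lemma row_len_ge (r : 'I_2) : (b <= row_len a b r)%N.
Proof. by rewrite /row_len; case: ifP. Qed.

Lemma row_len_le (r : 'I_2) : (row_len a b r <= a)%N.
Proof. by rewrite /row_len; case: ifP. Qed.

Lemma card_shape : #|[set x : 'I_2 * 'I_a | in_shape b x]| = (a + b)%N.
Proof.
rewrite -sum1_card.
transitivity (\sum_(r < 2) \sum_(c < a | (c < row_len a b r)%N) 1)%N.
  by rewrite pair_big_dep; apply: eq_bigl => x; rewrite inE.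
by rewrite big_ord_recl big_ord1 !(big_ord_narrow (row_len_le _)) !sum1_card !card_ord.
Qed.

Lemma entry_in_shape t x : in_shape b x -> entry t x.1 x.2 = Some (val (t x)).
Proof.
move=> Hx; rewrite /entry; case: pickP => [y /and3P[Hy /eqP H1 /eqP H2] | /(_ x)].
  by have -> : y = x by case: x y Hx Hy H1 H2 => [r c] [r' c'] /= _ _ /val_inj-> /val_inj->.
by rewrite Hx !eqxx.
Qed.

Lemma entry_bottom_ge t c : (b <= c)%N -> entry t 1 c = None.
Proof.
move=> Hbc; rewrite /entry; case: pickP => // -[r c'] /and3P[/= Hs /eqP Hr /eqP Hc].
by move: Hs; rewrite /in_shape /row_len /= Hr Hc ltnNge Hbc.
Qed.

(* [0] when there is no such box. *)
Definition cell t (r c : nat) : nat := odflt 0 (entry t r c).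

Lemma cell_in_shape t x : in_shape b x -> cell t x.1 x.2 = val (t x).
Proof. by move=> Hx; rewrite /cell entry_in_shape. Qed.

Lemma cell_row t (r : 'I_2) c (Hc : (c < row_len a b r)%N) :
  cell t r c = val (t (r, Ordinal (leq_trans Hc (row_len_le r)))).
Proof. exact: (cell_in_shape t (x := (r, Ordinal _)) Hc). Qed.

Lemma entry_lt_b t (r : 'I_2) c : (c < b)%N -> entry t r c = Some (cell t r c).
Proof.
move=> Hcb; have Hca := leq_trans Hcb hab.
have Hx : in_shape b (r, Ordinal Hca) by apply: leq_trans Hcb (row_len_ge r).
by rewrite /cell (entry_in_shape t Hx).
Qed.

Lemma row_standardP t : reflect
  [/\ forall x, ~~ in_shape b x -> val (t x) = 0%N,
      forall x, in_shape b x -> val (t x) != 0%N,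
      forall x y, in_shape b x -> in_shape b y -> t x = t y -> x = y &
      forall x y, in_shape b x -> in_shape b y -> x.1 = y.1 -> (x.2 < y.2)%N ->
        (val (t x) < val (t y))%N]
  (row_standard t).
Proof.
apply: (iffP idP) => [|[H0 H1 Hinj Hlt]].
  rewrite /row_standard -!andbA => /and4P[/forallP H0 /forallP H1 /forallP Hinj /forallP Hlt].
  split=> [x | x | x y Hx Hy Hxy | x y Hx Hy H1' H2'].
  - by move: (H0 x) => /implyP/[apply]/eqP.
  - by move: (H1 x) => /implyP.
  - by move: (Hinj x) => /forallP/(_ y)/implyP; rewrite Hx Hy Hxy eqxx => /(_ isT)/eqP.
  - by move: (Hlt x) => /forallP/(_ y)/implyP; apply; rewrite Hx Hy H1' eqxx H2'.
rewrite /row_standard -!andbA; apply/and4P.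
split; apply/forallP => x; try apply/forallP => y; apply/implyP.
- by move/H0->.
- exact: H1.
- by case/and3P=> Hx Hy /eqP/(Hinj x y Hx Hy)->.
- by case/and4P=> Hx Hy /eqP H1' H2'; exact: Hlt.
Qed.

Lemma row_standard_inj t x y : row_standard t ->
  in_shape b x -> in_shape b y -> t x = t y -> x = y.
Proof. by case/row_standardP=> _ _ Hinj _; exact: Hinj. Qed.

Lemma cell_col_neq t (r r' : 'I_2) c : row_standard t -> r != r' -> (c < b)%N ->
  cell t r c != cell t r' c.
Proof.
move=> rs neq_r Hcb; have Hc (s : 'I_2) := leq_trans Hcb (row_len_ge s).
rewrite (cell_row t (Hc r)) (cell_row t (Hc r')).
pose x (s : 'I_2) := (s, Ordinal (leq_trans (Hc s) (row_len_le s))).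
apply: contra neq_r => /eqP/val_inj/(row_standard_inj (x := x r) (y := x r') rs (Hc r) (Hc r')).
by case=> ->.
Qed.

Lemma row_standard_onto t k : row_standard t -> (k < a + b)%N ->
  exists2 x, in_shape b x & val (t x) = k.+1.
Proof.
move=> rs Hk; set Sh := [set x : 'I_2 * 'I_a | in_shape b x].
have Himg : t @: Sh = [set~ ord0].
  apply/eqP; rewrite eqEcard cardsC1 card_ord card_in_imset ?card_shape; last first.
    by move=> x y; rewrite !inE; exact: row_standard_inj.
  rewrite leqnn andbT; apply/subsetP => v /imsetP[x]; rewrite inE => Hx ->.
  have /row_standardP[_ Hneq0 _ _] := rs.
  by rewrite !inE; apply: contraNneq (Hneq0 x Hx) => ->.
have : (inord k.+1 : 'I_(a + b).+1) \in [set~ ord0].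
  by rewrite !inE; apply/negP => /eqP/(congr1 val); rewrite /= inordK.
rewrite -Himg => /imsetP[x]; rewrite inE => Hx Htx.
by exists x => //; rewrite -Htx /= inordK.
Qed.

Definition col_increasing t (c : nat) : bool := (cell t 0 c < cell t 1 c)%N.

Lemma inv_scan_column t (r r' : 'I_2) c : row_standard t -> r != r' -> (c < b)%N ->
  inv_scan t r c r' c a.+1 1
  = if (c.+1 < b)%N then (cell t r' c.+1 < cell t r c.+1)%N else (r' < r)%N.
Proof.
move=> rs neq_r Hcb; rewrite /= addn1; case: ifP => Hc1.
  by rewrite !entry_lt_b // (negbTE (cell_col_neq rs neq_r Hc1)).
have Hbc : (b <= c.+1)%N by rewrite leqNgt Hc1.
case: (ord2P r) (ord2P r') neq_r => -> [] -> //= _.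
  by rewrite entry_bottom_ge //; case: entry.
by rewrite entry_bottom_ge.
Qed.

Lemma column_inversions t (c : 'I_a) : row_standard t ->
  (inversion_pair t (ord0, c) (ord_max, c) + inversion_pair t (ord_max, c) (ord0, c))%N
  = if (c < b)%N then
      (col_increasing t c != if (c.+1 < b)%N then col_increasing t c.+1 else true) : nat
    else 0%N.
Proof.
move=> rs; rewrite /inversion_pair.
have [Hcb|Hbc] := ltnP c b; last first.
  have Hout : in_shape b (ord_max : 'I_2, c) = false.
    by rewrite /in_shape /row_len /= ltnNge Hbc.
  by rewrite Hout andbF.
have Hs (r : 'I_2) : in_shape b (r, c) by apply: leq_trans Hcb (row_len_ge r).
rewrite !Hs !inv_scan_column // -(cell_in_shape t (Hs ord0)).
rewrite -(cell_in_shape t (Hs ord_max)) !eqxx /= /col_increasing.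
have := cell_col_neq rs (isT : (ord0 : 'I_2) != ord_max) Hcb.
case: ifP => [Hc1|_] /=; last by case: ltngtP.
have := cell_col_neq rs (isT : (ord0 : 'I_2) != ord_max) Hc1.
by rewrite /=; case: (ltngtP (cell t 0 c)); case: (ltngtP (cell t 0 c.+1)).
Qed.

Lemma ninv_columns t : ninv t =
  (\sum_(c < a) (inversion_pair t (ord0, c) (ord_max, c)
                 + inversion_pair t (ord_max, c) (ord0, c)))%N.
Proof.
have sum_pair (I J : finType) (F : I * J -> nat) :
    (\sum_(p : I * J) F p = \sum_(i : I) \sum_(j : J) F (i, j))%N.
  by rewrite pair_bigA; apply: eq_bigr => -[].
have sum_ord2 (F : 'I_2 -> nat) : (\sum_(r < 2) F r = F ord0 + F ord_max)%N.
  by rewrite big_ord_recl big_ord1; congr (_ + F _); apply: val_inj.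
have sum_col (r r' : 'I_2) (c : 'I_a) : (\sum_(j < a)
    (if ((r, c), (r', j)) \in [set p | inversion_pair t p.1 p.2] then 1 else 0)
    = inversion_pair t (r, c) (r', c))%N.
  rewrite (bigD1 c) //= big1 ?addn0 => [|j ne_jc]; rewrite inE /=.
    by case: inversion_pair.
  by rewrite /inversion_pair /= (_ : (c == j :> nat) = false) ?andbF //; apply/negbTE; rewrite eq_sym.
have ip_diag x : inversion_pair t x x = false by rewrite /inversion_pair eqxx /= !andbF.
rewrite /ninv -sum1_card big_mkcond /= sum_pair sum_pair.
under eq_bigr => r _ do under eq_bigr => c _ do rewrite sum_pair sum_ord2 !sum_col.
by rewrite sum_ord2 -big_split; apply: eq_bigr => c _; rewrite !ip_diag add0n addn0.
Qed.

Lemma ninvE t : row_standard t -> ninv t = sign_changes (col_increasing t) b true.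
Proof.
move=> rs; rewrite ninv_columns (eq_bigr _ (fun c _ => column_inversions c rs)).
by rewrite -big_mkcond /= (big_ord_narrow hab).
Qed.

Definition row_entries t (r : 'I_2) : seq nat :=
  [seq (cell t r c).-1 | c <- iota 0 (row_len a b r)].

Definition in_row t (r : 'I_2) (k : nat) : bool :=
  [exists x, [&& in_shape b x, x.1 == r & val (t x) == k.+1]].

Lemma mem_row_entries t r k : row_standard t -> (k \in row_entries t r) = in_row t r k.
Proof.
case/row_standardP=> _ Hneq0 _ _; apply/mapP/existsP => [[c]|[x /and3P[Hx /eqP <- /eqP Hk]]].
  rewrite mem_iota add0n => /= Hc ->; exists (r, Ordinal (leq_trans Hc (row_len_le r))).
  by apply/and3P; split=> //; rewrite (cell_row t Hc) prednK ?lt0n ?Hneq0.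
by exists (val x.2); rewrite ?mem_iota // cell_in_shape ?Hk.
Qed.

Lemma sorted_row_entries t r : row_standard t -> sorted ltn (row_entries t r).
Proof.
case/row_standardP=> _ Hneq0 _ Hlt.
apply: (homo_sorted_in (P := fun c => c < row_len a b r)%N); last exact: iota_ltn_sorted.
  move=> i j Hi Hj Hij; rewrite (cell_row t Hi) (cell_row t Hj).
  by rewrite /ltn /= -ltnS !prednK ?lt0n ?Hneq0 //; apply: Hlt.
by apply/allP => c; rewrite mem_iota.
Qed.

Lemma in_row_lt t r k : in_row t r k -> (k < a + b)%N.
Proof. by case/existsP=> x /and3P[_ _ /eqP Hk]; rewrite -ltnS -Hk ltn_ord. Qed.

Lemma in_row_bottom t k : row_standard t -> (k < a + b)%N ->
  in_row t ord_max k = ~~ in_row t ord0 k.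
Proof.
move=> rs Hk; have [x Hx Htx] := row_standard_onto rs Hk.
have row_x (r : 'I_2) : in_row t r k = (x.1 == r).
  apply/existsP/idP => [[y /and3P[Hy /eqP <- /eqP Hty]]|/eqP <-].
    by rewrite (row_standard_inj rs Hx Hy) //; apply: val_inj; rewrite Htx Hty.
  by exists x; rewrite Hx Htx !eqxx.
by rewrite !row_x; case: (ord2P x.1) => ->.
Qed.

Definition filling_word t : (a + b).-tuple bool := [tuple in_row t ord_max k | k < a + b].

Lemma nth_filling_word t k : (k < a + b)%N -> nth false (filling_word t) k = in_row t ord_max k.
Proof. by move=> Hk; rewrite (nth_mktuple _ _ (Ordinal Hk)). Qed.

Lemma occ_filling_word t (r : 'I_2) : row_standard t ->
  occ (r == ord_max) (filling_word t) = row_entries t r.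
Proof.
move=> rs; apply: (irr_sorted_eq ltn_trans ltnn (sorted_occ _ _) (sorted_row_entries r rs)).
move=> k; rewrite mem_row_entries // mem_occ size_tuple.
apply/andP/idP => [[Hk]|Hin]; last first.
  have Hk := in_row_lt Hin; split=> //; rewrite nth_filling_word // in_row_bottom //.
  case: (ord2P r) Hin => -> Hin; first by rewrite Hin.
  by rewrite -in_row_bottom // Hin.
rewrite nth_filling_word // in_row_bottom //.
case: (ord2P r) => -> /eqP; first exact: negbFE.
by rewrite in_row_bottom // => ->.
Qed.

Definition balanced (w : seq bool) : bool :=
  (size w == a + b) && (height w == a%:Z - b%:Z)%R.

Lemma balanced_count w : balanced w -> count negb w = a /\ count id w = b.
Proof. by case/andP=> /eqP Hs /eqP; have := count_negb_id w; rewrite Hs /height; lia. Qed.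

Lemma size_occ_row w (r : 'I_2) : balanced w -> size (occ (r == ord_max) w) = row_len a b r.
Proof.
by case/balanced_count=> Ha Hb; case: (ord2P r) => -> /=; rewrite ?size_occF ?size_occT.
Qed.

Definition word_filling (w : seq bool) : filling a b :=
  [ffun x => if in_shape b x then inord (nth 0 (occ (x.1 == ord_max) w) x.2).+1 else ord0].

Lemma word_filling_in_shape w x : balanced w -> in_shape b x ->
  val (word_filling w x) = (nth 0 (occ (x.1 == ord_max) w) x.2).+1.
Proof.
move=> Hw Hx; rewrite ffunE Hx /= inordK // ltnS.
have Hc : (x.2 < size (occ (x.1 == ord_max) w))%N by rewrite size_occ_row.
by case/andP: Hw => /eqP <- _; apply: nth_occ_lt.
Qed.

Lemma row_standard_word_filling w : balanced w -> row_standard (word_filling w).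
Proof.
move=> Hw; have Hs x : in_shape b x -> (x.2 < size (occ (x.1 == ord_max) w))%N.
  by move=> Hx; rewrite size_occ_row.
apply/row_standardP; split=> [x Hx | x Hx | x y Hx Hy | x y Hx Hy H1 H2].
- by rewrite ffunE (negbTE Hx).
- by rewrite word_filling_in_shape.
- move/(congr1 val); rewrite !word_filling_in_shape // => -[Hk].
  have Hr : x.1 = y.1.
    have := nth_nth_occ (Hs x Hx); rewrite Hk (nth_nth_occ (Hs y Hy)).
    by case: (ord2P x.1) (ord2P y.1) => -> [] ->.
  have Hx2 := Hs x Hx; have Hy2 := Hs y Hy; rewrite Hr in Hk Hx2.
  move: Hk => /eqP; rewrite nth_uniq ?(sorted_uniq ltn_trans ltnn (sorted_occ _ _)) //.
  by move: Hr; case: x {Hx Hx2} => [r c]; case: y {Hy Hy2} => [r2 c2] /= -> /eqP/val_inj->.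
- rewrite !word_filling_in_shape // ltnS -H1.
  by apply: nth_occ_mono => //; rewrite H1; apply: Hs.
Qed.

Lemma row_entries_word_filling w r : balanced w ->
  row_entries (word_filling w) r = occ (r == ord_max) w.
Proof.
move=> Hw; rewrite -[RHS](mkseq_nth 0) /mkseq /row_entries (size_occ_row r Hw).
apply/eq_in_map => c; rewrite mem_iota /= => Hc.
by rewrite (cell_row _ Hc) word_filling_in_shape.
Qed.

Lemma filling_wordK w : balanced w -> filling_word (word_filling w) = w :> seq bool.
Proof.
move=> Hw; apply: eq_from_occ; first by rewrite size_tuple; case/andP: Hw => /eqP.
have := occ_filling_word ord_max (row_standard_word_filling Hw).
by rewrite row_entries_word_filling // eqxx.
Qed.

Lemma balanced_filling_word t : row_standard t -> balanced (filling_word t).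
Proof.
move=> rs; rewrite /balanced size_tuple eqxx /height -size_occT -size_occF.
have := occ_filling_word ord0 rs; have := occ_filling_word ord_max rs.
by rewrite /= => -> ->; rewrite !size_map !size_iota.
Qed.

Lemma word_fillingK t : row_standard t -> word_filling (filling_word t) = t.
Proof.
move=> rs; apply/ffunP => x; apply: val_inj.
have [Hx|Hx] := boolP (in_shape b x); last first.
  by rewrite ffunE (negbTE Hx); case/row_standardP: rs => /(_ x Hx) -> _ _ _.
rewrite word_filling_in_shape ?balanced_filling_word // occ_filling_word //.
rewrite (nth_map 0) ?size_iota // nth_iota // add0n cell_in_shape // prednK // lt0n.
by case/row_standardP: rs => _ /(_ x Hx).
Qed.

Lemma col_increasing_word_filling w c : balanced w -> (c < b)%N ->
  col_increasing (word_filling w) c = top_lt_bot w c.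
Proof.
move=> Hw Hcb; have [Ha Hb] := balanced_count Hw.
have Hc (r : 'I_2) : (c < row_len a b r)%N := leq_trans Hcb (row_len_ge r).
rewrite /col_increasing (cell_row _ (Hc ord0)) (cell_row _ (Hc ord_max)).
have Hx (r : 'I_2) : in_shape b (r, Ordinal (leq_trans (Hc r) (row_len_le r))) := Hc r.
rewrite !word_filling_in_shape ?Hx //= /top_lt_bot.
by rewrite !(set_nth_default 0) ?size_occT ?size_occF ?Ha ?Hb // (leq_trans Hcb hab).
Qed.

Lemma ninv_word_filling w : balanced w -> ninv (word_filling w) = changes true w.
Proof.
move=> Hw; have [_ Hb] := balanced_count Hw.
rewrite ninvE ?row_standard_word_filling // /changes Hb; apply: eq_bigr => c _.
by rewrite col_increasing_word_filling //; case: ifP => // Hc; rewrite col_increasing_word_filling.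
Qed.

End Fillings.

(** * Transfer recursions *)

Local Open Scope ring_scope.

(* [changes_poly n E final] and [dyck_poly n E] are the transfer recursions of
   the two generating functions over words of length [n] and height [E]
   ([changes_poly_sum], [dyck_poly_sum]); [ground_poly n E] is
   [dyck_poly (n - E) 0] for [0 <= E <= n]. *)
Fixpoint changes_poly (n : nat) (E : int) (final : bool) : {poly int} :=
  if n is n'.+1 then
    changes_poly n' (E - 1) final
    + 'X ^+ ((0 <= E) != final) * changes_poly n' (E + 1) (0 <= E)
  else (E == 0)%:R.

Fixpoint dyck_poly (n : nat) (E : int) : {poly int} :=
  if n is n'.+1 then
    (if 0 <= E then (1 + 'X) ^+ (E == 0) * (dyck_poly n' (E - 1) + dyck_poly n' (E + 1))
     else 0)
  else (E == 0)%:R.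

Fixpoint ground_poly (n : nat) (E : int) : {poly int} :=
  if n is n'.+1 then (if E == 0 then dyck_poly n'.+1 0 else ground_poly n' (E - 1))
  else (E == 0)%:R.

Lemma dyck_poly_neg n E : E < 0 -> dyck_poly n E = 0.
Proof. by case: n => [|n] /= HE; [rewrite lt_eqF | rewrite leNgt HE]. Qed.

Lemma dyck_poly_pos n E :
  0 < E -> dyck_poly n.+1 E = dyck_poly n (E - 1) + dyck_poly n (E + 1).
Proof. by move=> HE /=; rewrite ltW // gt_eqF // mul1r. Qed.

Lemma dyck_poly_0 n : dyck_poly n.+1 0 = (1 + 'X) * dyck_poly n 1.
Proof. by rewrite /= expr1 (@dyck_poly_neg n (0 - 1)) // !add0r. Qed.

Lemma ground_poly_pos n E : 0 < E -> ground_poly n.+1 E = ground_poly n (E - 1).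
Proof. by move=> HE /=; rewrite gt_eqF. Qed.

Lemma ground_poly_0 n : ground_poly n 0 = dyck_poly n 0.
Proof. by case: n. Qed.

Lemma changes_polyE n E final : changes_poly n E final =
  if 0 <= E then
    (if final then dyck_poly n E else 'X * dyck_poly n E + (1 - 'X) * ground_poly n E)
  else (if final then 'X * dyck_poly n (- E) else dyck_poly n (- E)).
Proof.
elim: n E final => [|n IH] E final.
  rewrite /=; case: (ltrP E 0) => HE; last by case: final => //; ring.
  by rewrite lt_eqF // gt_eqF ?oppr_gt0 //; case: final; rewrite ?mulr0.
rewrite [changes_poly _ _ _]/= !IH.
case: (ltrP E 0) => HE.
  rewrite (_ : 0 <= E - 1 = false); last by lia.
  rewrite (dyck_poly_pos n (_ : 0 < - E)) ?oppr_gt0 //.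
  have -> : - (E - 1) = - E + 1 by ring.
  case: (ltrP (E + 1) 0) => HE1.
    have -> : - (E + 1) = - E - 1 by ring.
    by case: final => /=; rewrite ?expr1 ?expr0; ring.
  have -> : E = -1 by lia.
  rewrite (_ : -1 + 1 = 0) // (_ : - -1 - 1 = 0) // ground_poly_0.
  by case: final; rewrite /= ?expr1 ?expr0; ring.
case: (ltrP 0 E) => HE0.
  rewrite (_ : 0 <= E - 1); last by lia.
  rewrite (_ : 0 <= E + 1); last by lia.
  rewrite dyck_poly_pos // ground_poly_pos //.
  by case: final; rewrite /= ?expr1 ?expr0; ring.
have -> : E = 0 by lia.
rewrite (_ : - (0 - 1) = 1) // (_ : 0 + 1 = 1) // dyck_poly_0.
have dyck_m1 : dyck_poly n (0 - 1) = 0 by rewrite dyck_poly_neg.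
by case: final; rewrite /= ?expr1 ?expr0 ?dyck_m1; ring.
Qed.

Lemma changes_poly_sum n E final :
  \sum_(s <- words n) (if height s == E then 'X ^+ changes final s else 0)
  = changes_poly n E final.
Proof.
elim: n E final => [|n IH] E final.
  by rewrite big_seq1 /changes /sign_changes big_ord0 /height /= eq_sym; case: eqP.
rewrite big_words_rcons big_split /= -!IH big_distrr /=.
congr (_ + _); apply: eq_bigr => s _.
  rewrite height_rcons changes_rcons_false.
  by rewrite (_ : (height s + 1 == E) = (height s == E - 1)) //; lia.
rewrite height_rcons changes_rcons_true.
rewrite (_ : (height s - 1 == E) = (height s == E + 1)); last by lia.
case: eqP => Hs; last by rewrite mulr0.
rewrite (_ : (count id s < count negb s)%N = (0 <= E)); last by move: Hs; rewrite /height; lia.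
by rewrite exprD mulrC.
Qed.

(** * Dyck paths *)

Definition dyck_word (s : seq bool) : bool :=
  all (fun i => count id (take i s) <= count negb (take i s))%N (iota 0 (size s).+1).

Definition returns (s : seq bool) : nat :=
  count (fun i => (0 < i)%N && (count negb (take i s) == count id (take i s)))
        (iota 0 (size s).+1).

Lemma take_rcons_size_le T (s : seq T) x i : (i <= size s)%N -> take i (rcons s x) = take i s.
Proof. by move=> Hi; rewrite -cats1 takel_cat. Qed.

Lemma dyck_word_rcons s x : dyck_word (rcons s x) = dyck_word s && (0 <= height (rcons s x)).
Proof.
rewrite /dyck_word size_rcons iota0_rcons all_rcons take_oversize ?size_rcons //.
rewrite andbC; congr (_ && _); last by rewrite /height; lia.
apply: eq_in_all => i; rewrite mem_iota /= => Hi.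
by rewrite take_rcons_size_le //; lia.
Qed.

Lemma returns_rcons s x : returns (rcons s x) = (returns s + (height (rcons s x) == 0))%N.
Proof.
rewrite /returns size_rcons iota0_rcons count_rcons take_oversize ?size_rcons //.
congr (_ + _)%N; last by rewrite /height /=; lia.
apply: eq_in_count => i; rewrite mem_iota /= => Hi.
by rewrite take_rcons_size_le //; lia.
Qed.

Lemma returns_le s : (returns s <= size s)%N.
Proof.
rewrite /returns /= add0n.
by apply: leq_trans (count_size _ _) _; rewrite size_iota.
Qed.

Lemma dyck_poly_sum n E :
  \sum_(s <- words n) (if (height s == E) && dyck_word s then (1 + 'X) ^+ returns s else 0)
  = dyck_poly n E.
Proof.
elim: n E => [|n IH] E.
  by rewrite big_seq1 /height /dyck_word /returns /= andbT expr0 eq_sym; case: eqP.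
rewrite big_words_rcons /=; case: (boolP (0 <= E)) => HE; last first.
  rewrite big1 // => s _; rewrite !dyck_word_rcons.
  by rewrite !ifF ?addr0 //; apply/negbTE/negP => /andP[/eqP -> /andP[_ H]];
    rewrite H in HE.
rewrite mulrDr -!IH !big_distrr -big_split /=; apply: eq_bigr => s _.
rewrite !dyck_word_rcons !returns_rcons !height_rcons.
congr (_ + _).
  rewrite (_ : (height s + 1 == E) = (height s == E - 1)); last by lia.
  case: eqP => Hs /=; last by rewrite mulr0.
  rewrite (_ : 0 <= height s + 1) ?andbT; last by lia.
  case: dyck_word; last by rewrite mulr0.
  have -> : (height s + 1 == 0) = (E == 0) by lia.
  by rewrite exprD mulrC.
rewrite (_ : (height s - 1 == E) = (height s == E + 1)); last by lia.
case: eqP => Hs /=; last by rewrite mulr0.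
rewrite (_ : 0 <= height s - 1) ?andbT; last by lia.
case: dyck_word; last by rewrite mulr0.
have -> : (height s - 1 == 0) = (E == 0) by lia.
by rewrite exprD mulrC.
Qed.

Lemma forall_ord_iota n (P : nat -> bool) : [forall i : 'I_n, P i] = all P (iota 0 n).
Proof.
apply/forallP/allP => [H x | H i]; last by apply: H; rewrite mem_iota /= ltn_ord.
by rewrite mem_iota add0n => /andP[_ Hx]; exact: (H (Ordinal Hx)).
Qed.

Lemma card_ord_iota m (P : nat -> bool) : #|[set i : 'I_m | P i]| = count P (iota 0 m).
Proof.
rewrite -sum1_card (eq_bigl (fun i : 'I_m => P i)) => [|i]; last by rewrite inE.
by rewrite -(big_mkord P (fun _ => 1%N)) sum1_count /index_iota subn0.
Qed.

Lemma dyckE a b (p : (a + b).-tuple bool) :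
  dyck p = (height p == a%:Z - b%:Z) && dyck_word p.
Proof.
rewrite /dyck (forall_ord_iota _ (fun i => pt_y p i <= pt_x p i)%N) /pt_x /pt_y.
rewrite !take_oversize ?size_tuple // /dyck_word size_tuple.
have := count_negb_id p; rewrite size_tuple => Hs.
congr (_ && _); rewrite /height; apply/andP/eqP => [[/eqP H1 /eqP H2]|H]; first by lia.
by split; apply/eqP; lia.
Qed.

Lemma nreturnsE n (p : n.-tuple bool) : nreturns p = returns p.
Proof.
rewrite /nreturns (card_ord_iota _ (fun i => (0 < i)%N && (pt_x p i == pt_y p i))).
by rewrite /returns size_tuple.
Qed.

Lemma sum_card_fibers (T : finType) (V : lmodType int) (S : nat -> {set T})
    (P : pred T) (f : T -> nat) (G : nat -> V) M :
  (forall k t, (t \in S k) = P t && (f t == k)) -> (forall t, P t -> f t < M)%N ->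
  \sum_(0 <= k < M) (#|S k|%:R : int) *: G k = \sum_(t | P t) G (f t).
Proof.
move=> memS ltfM.
under eq_bigr => k _ do rewrite scaler_nat -sumr_const big_mkcond /=.
rewrite exchange_big /= [RHS]big_mkcond; apply: eq_bigr => t _.
under eq_bigr => k _ do rewrite memS.
case: (boolP (P t)) => Pt /=; last by rewrite big1.
rewrite (bigD1_seq (f t)) ?mem_index_iota ?ltfM ?iota_uniq //= eqxx big1 ?addr0 // => k.
by rewrite eq_sym => /negbTE ->.
Qed.

Lemma dyck_side a b :
  \sum_(0 <= i < (a + b).+1) (#|D_i a b i|%:R : int) *: (1 + 'X) ^+ i
  = dyck_poly (a + b) (a%:Z - b%:Z).
Proof.
rewrite (@sum_card_fibers _ _ _ (@dyck a b) (@nreturns _)) => [|i p|p _]; first last.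
- by rewrite ltnS nreturnsE -{2}(size_tuple p) returns_le.
- by rewrite inE.
rewrite -dyck_poly_sum -big_tuple_words big_mkcond; apply: eq_bigr => p _.
by rewrite dyckE nreturnsE.
Qed.

Lemma inversion_side a b : (b <= a)%N ->
  \sum_(0 <= k < ((a + b) ^ 2).+1) (#|S_k a b k|%:R : int) *: 'X^k
  = changes_poly (a + b) (a%:Z - b%:Z) true.
Proof.
move=> hab.
rewrite (@sum_card_fibers _ _ _ (@row_standard a b) (@ninv a b)) => [|k t|t rs]; first last.
- rewrite ltnS (ninvE hab rs); apply: leq_trans (sign_changes_le _ _ _) _.
  by rewrite expnS expn1; nia.
- by rewrite inE.
rewrite -changes_poly_sum -big_tuple_words.
rewrite (reindex_onto (fun p : (a + b).-tuple bool => word_filling a b p) (@filling_word a b));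
  last by move=> t rs; exact: word_fillingK.
rewrite big_mkcond /=; apply: eq_bigr => p _.
have -> : (height p == a%:Z - b%:Z) = balanced a b p by rewrite /balanced size_tuple eqxx.
have [Hp|Hp] := boolP (balanced a b p).
  rewrite row_standard_word_filling // ninv_word_filling //.
  by have -> : filling_word (word_filling a b p) == p by apply/eqP/val_inj/filling_wordK.
rewrite (_ : _ && _ = false) //; apply/negbTE/negP => /andP[rs /eqP Hp'].
by case/negP: Hp; rewrite -Hp'; exact: balanced_filling_word.
Qed.

Theorem mainTheorem10 (a b : nat) (hab : (b <= a)%N) (hb : (1 <= b)%N) :
  \sum_(0 <= k < ((a + b) ^ 2).+1) (#|S_k a b k|%:R : int) *: 'X^k
  = \sum_(0 <= i < (a + b).+1) (#|D_i a b i|%:R : int) *: (1 + 'X) ^+ i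
  :> {poly int}.
Proof.
rewrite inversion_side // dyck_side changes_polyE.
by have -> : 0 <= a%:Z - b%:Z by lia.
Qed.
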